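(* Let $H$ be a $3$-uniform hypergraph on $8$ vertices not containing a Fano plane. If $H$ contains the complete $3$-uniform hypergraph $K_6^{(3)}$ on $6$ vertices, then $e(H)\le 46<b(8)$, where $b(8)=48$.
   Context: $e(H)$ is the number of edges. ''Containing'' means having a (not necessarily induced) subhypergraph isomorphic to it. The Fano plane is the hypergraph on vertex set $\{1,\dots,7\}$ with edges $123,345,156,147,367,257,246$. $b(n)=\frac{n-2}{2}\lfloor n^2/4\rfloor$ is the number of edges of the balanced complete bipartite $3$-uniform hypergraph on $n$ vertices. *)

From mathcomp Require Import all_boot.
Set Implicit Arguments. Unset Strict Implicit. Unset Printing Implicit Defensive.

Definition uniform3 (T : finType) (H : {set {set T}}) : Prop :=
  forall e, e \in H -> #|e| = 3.

Definition nedges (T : finType) (H : {set {set T}}) : nat := #|H|.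

(* Fano plane on vertices {0..6} (paper's 1..7 shifted by one):
   edges 123,345,156,147,367,257,246. *)
Definition fano_edges : seq (nat * nat * nat) :=
  [:: (0,1,2); (2,3,4); (0,4,5); (0,3,6); (2,5,6); (1,4,6); (1,3,5)].

Definition contains_fano (T : finType) (H : {set {set T}}) : Prop :=
  exists f : 'I_7 -> T, injective f /\
    forall a b c, (a, b, c) \in fano_edges ->
      [set f (inord a); f (inord b); f (inord c)] \in H.

Definition contains_K63 (T : finType) (H : {set {set T}}) : Prop :=
  exists S : {set T}, #|S| = 6 /\
    forall e : {set T}, e \subset S -> #|e| = 3 -> e \in H.

(* b(n) = (n-2)/2 * floor(n^2/4); (n-2) * floor(n^2/4) is always even. *)
Definition b (n : nat) : nat := ((n - 2) * (n ^ 2 %/ 4)) %/ 2.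

From mathcomp Require Import all_boot zify.
Set Implicit Arguments. Unset Strict Implicit. Unset Printing Implicit Defensive.

(* Let S span a K_6^(3) in H and let x lie outside S. The link graph of x on S
   (ij is an edge when xij is in H) has no perfect matching: its three edges,
   joined to x, would be the three Fano lines through x, while the other four
   lines lie inside S. A graph on six vertices with at most four non-edges has
   a perfect matching, so x misses at least five triples xij. The two vertices
   outside S miss disjoint sets of triples, whence e(H) <= C(8,3) - 10 = 46. *)

Notation matching := ((nat * nat) * (nat * nat) * (nat * nat))%type (only parsing).

Definition pairs6 : seq (nat * nat) :=
  [seq (i, j) | i <- iota 0 6, j <- iota i.+1 (5 - i)].

Definition disjoint_pairs (m : matching) : bool :=
  let: (p, q, r) := m in uniq [:: p.1; p.2; q.1; q.2; r.1; r.2].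

Definition perfect_matchings6 : seq matching :=
  [seq m <- [seq (pq, r) | pq <- [seq (p, q) | p <- pairs6, q <- pairs6], r <- pairs6]
     | let: (p, q, r) := m in disjoint_pairs m && (p.1 < q.1 < r.1)].

Definition matching_in (g : nat -> nat -> bool) (m : matching) : bool :=
  let: (p, q, r) := m in [&& g p.1 p.2, g q.1 q.2 & g r.1 r.2].

Definition nonedges6 (g : nat -> nat -> bool) : nat :=
  count (fun p => ~~ g p.1 p.2) pairs6.

Lemma mem_pairs6 i j : ((i, j) \in pairs6) = (i < j < 6).
Proof.
apply/allpairsPdep/idP => [[i' [j' [+ + [-> ->]]]] | /andP [ij j6]].
  by rewrite !mem_iota; lia.
by exists i, j; rewrite !mem_iota; split => //; lia.
Qed.

Lemma mem_perfect_matchings6 p q r : (p, q, r) \in perfect_matchings6 ->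
  [/\ p \in pairs6, q \in pairs6, r \in pairs6 & disjoint_pairs (p, q, r)].
Proof.
rewrite mem_filter => /andP [/andP [disj _]].
case/allpairsP => -[pq' r'] [pq6 r6 [pqE rE]]; subst r'.
move: pq6; rewrite -pqE => /allpairsP [[p' q'] [p6 q6 [pE qE]]].
by subst p q; split.
Qed.

Fixpoint all_bitseqs n (P : pred (seq bool)) : bool :=
  if n is n'.+1 then
    all_bitseqs n' (fun l => P (true :: l)) && all_bitseqs n' (fun l => P (false :: l))
  else P [::].

Lemma all_bitseqs_forall n P : all_bitseqs n P -> forall l, size l = n -> P l.
Proof.
elim: n P => [|n IHn] P /=; first by move=> PE [].
case/andP=> Ptrue Pfalse [//|[] l] /= [sz_l].
  exact: (IHn _ Ptrue).
exact: (IHn _ Pfalse).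
Qed.

Definition graph_of_bits (l : seq bool) (i j : nat) : bool :=
  nth false l (index (i, j) pairs6).

Lemma graph_of_bitsK (g : nat -> nat -> bool) i j : (i, j) \in pairs6 ->
  graph_of_bits [seq g p.1 p.2 | p <- pairs6] i j = g i j.
Proof. by move=> ij6; rewrite /graph_of_bits (nth_map (0, 0)) ?index_mem ?nth_index. Qed.

(* [ms] is a parameter so that [vm_compute] evaluates [perfect_matchings6]
   once rather than once per graph. *)
Definition matchable_or_sparse (ms : seq matching) (l : seq bool) : bool :=
  has (matching_in (graph_of_bits l)) ms || (4 < nonedges6 (graph_of_bits l)).

(* Exhaustive check over the 2^15 graphs on six vertices. *)
Lemma all_bitseqs_matchable_or_sparse : all_bitseqs 15 (matchable_or_sparse perfect_matchings6).
Proof. by vm_compute. Qed.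

Lemma graph6_matchable_or_sparse (g : nat -> nat -> bool) :
  has (matching_in g) perfect_matchings6 || (4 < nonedges6 g).
Proof.
pose bits := [seq g p.1 p.2 | p <- pairs6].
have gE : {in pairs6, forall p, graph_of_bits bits p.1 p.2 = g p.1 p.2}.
  by case=> i j; apply: graph_of_bitsK.
have hasE : has (matching_in (graph_of_bits bits)) perfect_matchings6
          = has (matching_in g) perfect_matchings6.
  apply: eq_in_has => -[[p q] r] /mem_perfect_matchings6 [p6 q6 r6 _].
  by rewrite /= !gE.
have nonedgesE : nonedges6 (graph_of_bits bits) = nonedges6 g.
  by apply: eq_in_count => p /gE /= ->.
rewrite -hasE -nonedgesE.
exact: all_bitseqs_forall all_bitseqs_matchable_or_sparse _ (size_map _ pairs6).
Qed.

Lemma cards3 (T : finType) (a b c : T) : uniq [:: a; b; c] -> #|[set a; b; c]| = 3.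
Proof.
move=> abc; rewrite -[3]/(size [:: a; b; c]) -(card_uniqP abc).
by apply: eq_card => y; rewrite !inE orbA.
Qed.

Lemma contains_fano_of_point_lines (T : finType) (H : {set {set T}}) (f : nat -> T) :
  {in [pred i | i < 7] &, injective f} ->
  (forall i j k, 0 < i < 7 -> 0 < j < 7 -> 0 < k < 7 -> uniq [:: i; j; k] ->
     [set f i; f j; f k] \in H) ->
  [set f 0; f 1; f 2] \in H -> [set f 0; f 4; f 5] \in H -> [set f 0; f 3; f 6] \in H ->
  contains_fano H.
Proof.
move=> f_inj f_off l12 l45 l36; exists (fun k : 'I_7 => f k); split.
  by move=> i j /f_inj fij; apply/val_inj/fij; rewrite inE.
have lines : all (fun t => [set f t.1.1; f t.1.2; f t.2] \in H) fano_edges.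
  by rewrite /= l12 l45 l36 !f_off.
have small : all (fun t => [&& t.1.1 < 7, t.1.2 < 7 & t.2 < 7]) fano_edges by [].
move=> a b c abc; have /and3P [a7 b7 c7] := allP small _ abc.
by rewrite !inordK //; apply: (allP lines _ abc).
Qed.

Definition missing_link_triples (T : finType) (H : {set {set T}}) (S : {set T}) (x : T) :
    {set {set T}} :=
  [set e : {set T} | [&& #|e| == 3, x \in e, e :\ x \subset S & e \notin H]].

Section LinkOfOutsideVertex.

Variables (T : finType) (H : {set {set T}}) (S : {set T}) (x : T).
Hypotheses (cardS : #|S| = 6) (xNS : x \notin S)
  (S_complete : forall e : {set T}, e \subset S -> #|e| = 3 -> e \in H).

Let tau i := nth x (enum S) i.
Let link i j := [set x; tau i; tau j] \in H.

Let tau_in_S i : i < 6 -> tau i \in S.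
Proof. by move=> i6; rewrite -mem_enum mem_nth // -cardE cardS. Qed.

Let tau_neq_x i : i < 6 -> tau i != x.
Proof. by move/tau_in_S; apply: contraTneq => ->. Qed.

Let tau_inj : {in [pred i | i < 6] &, injective tau}.
Proof.
move=> i j i6 j6 /eqP; rewrite nth_uniq ?enum_uniq -?cardE ?cardS //.
by move/eqP.
Qed.

Lemma fano_of_link_matching : has (matching_in link) perfect_matchings6 -> contains_fano H.
Proof.
case/hasP => -[[[a b] [c d]] [e f]] /mem_perfect_matchings6 [ab6 cd6 ef6 disj].
case/and3P => lab lcd lef.
(* x is the Fano point 0, whose lines are 012, 045 and 036. *)
pose idx := [:: a; b; e; c; d; f].
have idx6 : all [pred i | i < 6] idx.
  by move: ab6 cd6 ef6; rewrite !mem_pairs6 /=; lia.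
have uidx : uniq idx.
  rewrite (perm_uniq (_ : perm_eq _ [:: a; b; c; d; e; f])) //.
  by rewrite (perm_cat2l [:: a; b] [:: e; c; d; f] [:: c; d; e; f]) (perm_catCA [:: e] [:: c; d] [:: f]).
pose F k := nth x (x :: map tau idx) k.
have F_inj : {in [pred i | i < 7] &, injective F}.
  have uF : uniq (x :: map tau idx).
    rewrite cons_uniq map_inj_in_uniq ?uidx ?andbT; last first.
      by move=> i j /(allP idx6) i6 /(allP idx6) j6; apply: tau_inj.
    by apply/mapP => -[i /(allP idx6) i6 xE]; move: (tau_neq_x i6); rewrite -xE eqxx.
  by move=> i j i7 j7 /eqP; rewrite nth_uniq // => /eqP.
have F_S k : 0 < k < 7 -> F k \in S.
  case: k => [//|k] /andP [_ k6].
  change (nth x (map tau idx) k \in S); rewrite (nth_map 0) //.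
  by apply/tau_in_S/(allP idx6)/mem_nth.
apply: (contains_fano_of_point_lines F_inj) => // i j k i7 j7 k7 ijk.
apply: S_complete.
  by apply/subsetP => y; rewrite !inE -orbA => /or3P [] /eqP ->; apply: F_S.
apply: cards3; rewrite -[[:: F i; F j; F k]]/(map F [:: i; j; k]) map_inj_in_uniq //.
by apply: sub_in2 F_inj => n; rewrite !inE => /or3P [] /eqP ->; lia.
Qed.

Let link_triple_inj : {in pairs6 &, injective (fun p => [set x; tau p.1; tau p.2])}.
Proof.
move=> [i j] [k l]; rewrite !mem_pairs6 => /andP [ij j6] /andP [kl l6] /= ijkl.
have memE m : m < 6 -> tau m \in [set x; tau k; tau l] -> (m = k) \/ (m = l).
  move=> m6; rewrite !inE (negbTE (tau_neq_x m6)) /=.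
  by case/orP => /eqP mE; [left | right]; move: mE; apply: tau_inj; rewrite inE; lia.
have iE : i = k \/ i = l by apply: memE; [lia | rewrite -ijkl !inE eqxx !orbT].
have jE : j = k \/ j = l by apply: memE => //; rewrite -ijkl !inE eqxx !orbT.
suff [-> ->] : i = k /\ j = l by [].
lia.
Qed.

Lemma link_nonedges_le_missing : nonedges6 link <= #|missing_link_triples H S x|.
Proof.
rewrite /nonedges6 -size_filter cardE.
rewrite -(size_map (fun p => [set x; tau p.1; tau p.2])); apply: uniq_leq_size.
  rewrite map_inj_in_uniq ?filter_uniq //.
  by apply: sub_in2 link_triple_inj => p; rewrite mem_filter => /andP [].
move=> e /mapP [[i j]]; rewrite mem_filter mem_pairs6 /= => /andP [nlink /andP [ij j6]] ->.
have i6 : i < 6 by lia.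
have uniq3 : uniq [:: x; tau i; tau j].
  rewrite /= !inE negb_or !(eq_sym x) !tau_neq_x //= andbT (inj_in_eq tau_inj) ?inE //.
  by rewrite neq_ltn ij.
rewrite mem_enum inE nlink andbT !inE eqxx cards3 //=.
apply/subsetP => y; rewrite !inE -orbA => /andP [yx /or3P []] /eqP yE.
- by rewrite yE eqxx in yx.
- by rewrite yE tau_in_S.
- by rewrite yE tau_in_S.
Qed.

Lemma missing_link_triples_ge5 : ~ contains_fano H -> 4 < #|missing_link_triples H S x|.
Proof.
move=> noF; case/orP: (graph6_matchable_or_sparse link) => [/fano_of_link_matching // | sparse].
exact: leq_trans sparse link_nonedges_le_missing.
Qed.

End LinkOfOutsideVertex.

Lemma disjoint_missing_link_triples (T : finType) (H : {set {set T}}) (S : {set T}) (u v : T) :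
  v \notin S -> u != v ->
  [disjoint missing_link_triples H S u & missing_link_triples H S v].
Proof.
move=> vNS uv; rewrite -setI_eq0; apply/eqP/setP => e; rewrite !inE.
apply/negbTE; apply: contraNN vNS => /and4P [/and4P [_ _ eS _] _ ve _].
by apply: (subsetP eS); rewrite !inE ve eq_sym uv.
Qed.

Theorem fact2p4 (H : {set {set 'I_8}}) :
  uniform3 H -> ~ contains_fano H -> contains_K63 H ->
  nedges H <= 46 /\ 46 < b 8 /\ b 8 = 48.
Proof.
move=> H3 noF [S [cardS S_complete]]; split; last by [].
have /cards2P [u [v [uv SC]]] : #|~: S| == 2.
  by apply/eqP; have := cardsC S; rewrite card_ord cardS; lia.
have [uNS vNS] : u \notin S /\ v \notin S by rewrite -!in_setC SC !inE !eqxx orbT.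
pose M w := missing_link_triples H S w.
have Mu5 : 4 < #|M u| := missing_link_triples_ge5 cardS uNS S_complete noF.
have Mv5 : 4 < #|M v| := missing_link_triples_ge5 cardS vNS S_complete noF.
have MuMv : [disjoint M u & M v] := disjoint_missing_link_triples H vNS uv.
have HM : [disjoint H & M u :|: M v].
  by rewrite disjoint_subset; apply/subsetP => e eH; rewrite !inE eH !andbF.
have triples : H :|: (M u :|: M v) \subset [set e : {set 'I_8} | #|e| == 3].
  apply/subsetP => e; rewrite !inE.
  by case/or3P => [/H3 -> | /and4P [-> _ _ _] | /and4P [-> _ _ _]].
have := subset_leq_card triples; rewrite card_draws card_ord.
rewrite cardsU (disjoint_setI0 HM) cardsU (disjoint_setI0 MuMv) cards0 !subn0.
rewrite /nedges (_ : 'C(8, 3) = 56) //; lia.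
Qed.
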